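(* Let $\hat k \ge k$ and let $(\hat g, \hat q) \in \mathcal{G} \times \mathcal{Q}$ be a minimizer of $$\min_{\hat g \in \mathcal{G},\, \hat q \in \mathcal{Q}} \; \mathbb{E}_{(x,x') \sim p(x,x')}\Big[\sum_{\hat a \in \hat{\mathcal{A}}} \hat q(\hat a \mid x, x')\,\|x' - \hat g(x,\hat a)\|_2^2 + \beta\, H(\hat q(\cdot \mid x, x'))\Big],$$ where $\beta>0$. For $(x,a) \in \mathrm{supp}[p(x,a)]$ and $\hat a \in \hat{\mathcal A}$, put $v(\hat a \mid x, a) := \hat q(\hat a \mid x, g(x,a))$. Then: 1. If Assumptions A1 and A2 hold, there is a function $v : \mathrm{supp}[p(x,a)] \to \hat{\mathcal A}$ such that for all $(x,a) \in \mathrm{supp}[p(x,a)]$ and all $\hat a\in\hat{\mathcal A}$, $v(\hat a \mid x,a) = \mathbf{1}(\hat a = v(x,a))$. 2. If Assumptions A1, A2 and A3 hold, there is a map $v : \mathrm{supp}[p(a)] \to \hat{\mathcal A}$ such that for all $(x,a) \in \mathrm{supp}[p(x,a)]$ and all $\hat a\in\hat{\mathcal A}$, $v(\hat a \mid x,a) = \mathbf{1}(\hat a = v(a))$. 3. If Assumptions A1, A2, A3 and A4 hold, the map $v : \mathrm{supp}[p(a)] \to \hat{\mathcal A}$ from part 2 is injective.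
   Context: Data-generating process: $\mathcal X := [0,1]^d$, $\mathcal X' := [0,1]^{d'}$, $\mathcal A := \{1,\dots,k\}$. A state $x \in \mathcal X$ is drawn from a Lebesgue density $p(x)$ on $\mathcal X$. An action is then drawn as $a \sim \pi(a \mid x)$, where $\pi(\cdot\mid x)$ is a probability mass function on $\mathcal A$. The next observation is $x' = g(x,a)$ for a fixed function $g : \mathcal X \times \mathcal A \to \mathcal X'$. Write $p(x,a) := p(x)\pi(a\mid x)$, $p(a) := \int p(x,a)\,dx$, and $p(x\mid a) := p(x,a)/p(a)$ when $p(a)>0$. Let $p(x,x')$ denote the joint law of $(x, g(x,a))$ under this process, so $\mathbb E_{p(x,x')}[h(x,x')] = \mathbb E_{p(x,a)}[h(x,g(x,a))]$. Supports: $\mathrm{supp}[p(a)] := \{a \in \mathcal A : p(a)>0\}$. For $a \in \mathrm{supp}[p(a)]$, $\mathrm{supp}[p(x\mid a)]$ is the set of $x_0 \in \mathcal X$ such that every open neighborhood $U$ of $x_0$ satisfies $\int_U p(x\mid a)\,dx > 0$. Also $\mathrm{supp}[p(x,a)] := \bigcup_{a \in \mathrm{supp}[p(a)]} \mathrm{supp}[p(x\mid a)] \times \{a\}$. Hypothesis spaces: $\hat{\mathcal A} := \{1,\dots,\hat k\}$. $\mathcal G$ is the set of functions $\hat g : \mathcal X \times \hat{\mathcal A} \to \mathcal X'$ such that $x \mapsto \hat g(x,\hat a)$ is continuous for every $\hat a \in \hat{\mathcal A}$. $\mathcal Q$ is the set of functions $\hat q : \hat{\mathcal A} \times \mathcal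 X \times \mathcal X' \to [0,1]$ such that: (i) $\sum_{\hat a \in \hat{\mathcal A}} \hat q(\hat a \mid x,x') = 1$ for all $(x,x')$; (ii) $(x,x') \mapsto \hat q(\hat a \mid x, x')$ is continuous for every $\hat a$. Entropy: $H(\hat q(\cdot\mid x,x')) := -\sum_{\hat a} \hat q(\hat a\mid x,x')\log \hat q(\hat a \mid x,x')$, with the convention $0\log 0 = 0$. Assumptions: A1 (continuity): for all $a\in\mathcal A$, $x \mapsto g(x,a)$ is continuous. A2 (injectivity): for all $x \in \mathcal X$ and $a_1 \ne a_2$ in $\mathcal A$, $g(x,a_1) \ne g(x,a_2)$. A3: for every $a \in \mathrm{supp}[p(a)]$, $\mathrm{supp}[p(x\mid a)]$ is a connected subset of $\mathcal X$. A4: for all $a_1,a_2 \in \mathrm{supp}[p(a)]$, $\mathrm{supp}[p(x\mid a_1)] \cap \mathrm{supp}[p(x\mid a_2)] \ne \emptyset$. *)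

From HB Require Import structures.
From mathcomp Require Import all_boot all_order all_algebra.
From mathcomp Require Import all_classical all_reals all_analysis.
Unset Printing Implicit Defensive.
Import Order.TTheory GRing.Theory Num.Theory.
Import numFieldNormedType.Exports.
Local Open Scope classical_set_scope.
Local Open Scope ring_scope.

Section Defs.
Context {R : realType}.

Definition cube (n : nat) : set 'rV[R]_n :=
  [set x | forall i : 'I_n, 0 <= x ord0 i <= 1].

(* Iterated Lebesgue integral over the cube [0,1]^n (coordinate by coordinate).
   For nonnegative Borel integrands this is the Lebesgue integral over [0,1]^n
   (Tonelli). *)
Fixpoint cube_int {n : nat} : ('rV[R]_n -> \bar R) -> \bar R :=
  match n with
  | 0%N => fun f => f 0
  | n'.+1 => fun f =>
      (\int[@lebesgue_measure R]_(t in `[0%R, 1%R]) @cube_int n' (fun v : 'rV[R]_n' =>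
                     f (row_mx (t%:M : 'M[R]_1) v)))%E
  end.

Definition borel_fun {n : nat} (f : 'rV[R]_n -> R) : Prop :=
  forall B : set R, open B ->
    (<<s [set U : set 'rV[R]_n | open U] >>) (f @^-1` B).

Definition sqnorm {n : nat} (v : 'rV[R]_n) : R := \sum_(i < n) v ord0 i ^+ 2.

Definition xlogx (t : R) : R := if t == 0 then 0 else t * ln t.

Definition entropy {kh d d' : nat} (qh : 'I_kh -> 'rV[R]_d -> 'rV[R]_d' -> R)
  (x : 'rV[R]_d) (x' : 'rV[R]_d') : R :=
  - \sum_(ah < kh) xlogx (qh ah x x').

Definition inG {kh d d' : nat} (gh : 'rV[R]_d -> 'I_kh -> 'rV[R]_d') : Prop :=
  (forall x ah, cube d x -> cube d' (gh x ah)) /\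
  (forall ah, {within cube d, continuous (fun x => gh x ah)}).

Definition inQ {kh d d' : nat} (qh : 'I_kh -> 'rV[R]_d -> 'rV[R]_d' -> R) : Prop :=
  (forall ah x x', cube d x -> cube d' x' -> 0 <= qh ah x x' <= 1) /\
  (forall x x', cube d x -> cube d' x' -> \sum_(ah < kh) qh ah x x' = 1) /\
  (forall ah, {within [set z : 'rV[R]_d * 'rV[R]_d' | cube d z.1 /\ cube d' z.2],
                 continuous (fun z => qh ah z.1 z.2)}).

(* The objective E_{p(x,a)}[ sum_ah qh(ah|x,x') ||x' - gh(x,ah)||^2 + beta H ]
   with x' = g(x,a). *)
Definition objective {k kh d d' : nat} (beta : R) (p : 'rV[R]_d -> R)
  (pi : 'I_k -> 'rV[R]_d -> R) (g : 'rV[R]_d -> 'I_k -> 'rV[R]_d')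
  (gh : 'rV[R]_d -> 'I_kh -> 'rV[R]_d') (qh : 'I_kh -> 'rV[R]_d -> 'rV[R]_d' -> R)
  : \bar R :=
  cube_int (fun x =>
    (\sum_(a < k) p x * pi a x *
       (\sum_(ah < kh) qh ah x (g x a) * sqnorm (g x a - gh x ah)
        + beta * entropy qh x (g x a)))%:E).

Definition pa {k d : nat} (p : 'rV[R]_d -> R) (pi : 'I_k -> 'rV[R]_d -> R)
  (a : 'I_k) : \bar R := cube_int (fun x => (p x * pi a x)%:E).

Definition pcond {k d : nat} (p : 'rV[R]_d -> R) (pi : 'I_k -> 'rV[R]_d -> R)
  (a : 'I_k) (x : 'rV[R]_d) : R := p x * pi a x / fine (pa p pi a).

Definition supp_a {k d : nat} (p : 'rV[R]_d -> R) (pi : 'I_k -> 'rV[R]_d -> R)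
  : set 'I_k := [set a | (0 < pa p pi a)%E].

(* supp[p(x|a)] : points x0 of X every open neighbourhood U of which (in X,
   i.e. U = V `&` X with V open in R^d) has positive p(.|a)-mass *)
Definition supp_x_a {k d : nat} (p : 'rV[R]_d -> R) (pi : 'I_k -> 'rV[R]_d -> R)
  (a : 'I_k) : set 'rV[R]_d :=
  [set x0 | cube d x0 /\ forall V : set 'rV[R]_d, open V -> V x0 ->
     (0 < cube_int (fun x => (\1_V x * pcond p pi a x)%:E))%E].

Definition supp_xa {k d : nat} (p : 'rV[R]_d -> R) (pi : 'I_k -> 'rV[R]_d -> R)
  (x : 'rV[R]_d) (a : 'I_k) : Prop := supp_a p pi a /\ supp_x_a p pi a x.

End Defs.

(* Under injectivity of the branches [g x .], a competitor with zero objective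
   exists: take [gh] to be the true branches and let the responsibility of a
   branch be the normalized product of the distances to all the other
   branches.  Hence the objective of a minimizer vanishes, and since its
   integrand is nonnegative, no continuous function that is positive at a point
   of the support can stay below the integrand.  Applied to [beta] times the
   Gini impurity [sum q (1 - q)], which the entropy dominates, this makes the
   responsibilities one-hot on the support; by continuity they are constant on
   each connected support [supp p(x|a)]; and if two actions sharing a support
   point got the same label [w], the reconstruction term would force
   [gh x w = g x a1 = g x a2], contradicting injectivity. *)

From HB Require Import structures.
From mathcomp Require Import all_boot all_order all_algebra.
From mathcomp Require Import all_classical all_reals all_analysis.
From mathcomp Require Import ring lra.
Import Order.TTheory GRing.Theory Num.Theory.
Import numFieldNormedType.Exports.
Local Open Scope classical_set_scope.
Local Open Scope ring_scope.

Definition within_continuous_at {T U : topologicalType} (A : set T) (f : T -> U)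
  (x : T) := f @ within A (nbhs x) --> f x.

Section within_continuity.
Context {T U : topologicalType}.

Lemma within_continuous_atP (A : set T) (f : T -> U) :
  {within A, continuous f} <-> forall x, A x -> within_continuous_at A f x.
Proof. exact: subspace_continuousP. Qed.

Lemma continuous_within_continuous_at (A : set T) (f : T -> U) x :
  {for x, continuous f} -> within_continuous_at A f x.
Proof. by move=> cf; apply: cvg_trans cf; apply: cvg_app; apply: cvg_within. Qed.

Lemma within_continuous_at_comp {V : topologicalType} (A : set T) (B : set U)
    (f : T -> U) (g : U -> V) x :
  within_continuous_at A f x -> (forall y, A y -> B (f y)) ->
  within_continuous_at B g (f x) -> within_continuous_at A (g \o f) x.
Proof.
move=> cf fAB cg; apply: cvg_trans cg => P /cf; rewrite !nbhs_filterE /=.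
by apply: filterS2 (withinT A (nbhs_filter x)) => z Az /(_ (fAB z Az)).
Qed.

Lemma within_continuous_subset (A S : set T) (f : T -> U) :
  S `<=` A -> (forall x, S x -> within_continuous_at A f x) ->
  {within S, continuous f}.
Proof.
move=> SA cf; apply/within_continuous_atP => x Sx.
by apply: cvg_trans (cf x Sx); apply: cvg_app; exact: within_subset.
Qed.

End within_continuity.

Section within_continuity_real.
Context {R : realType} {T : topologicalType} {A : set T} {x : T}.

Lemma within_continuous_at_sum (I : Type) (s : seq I) (P : pred I)
    (f : I -> T -> R) :
  (forall i, within_continuous_at A (f i) x) ->
  within_continuous_at A (fun y => \sum_(i <- s | P i) f i y) x.
Proof. by move=> cf; apply: cvg_big => // [|i _]; [exact: add_continuous|exact: cf]. Qed.

Lemma within_continuous_at_prod (I : Type) (s : seq I) (P : pred I)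
    (f : I -> T -> R) :
  (forall i, within_continuous_at A (f i) x) ->
  within_continuous_at A (fun y => \prod_(i <- s | P i) f i y) x.
Proof. by move=> cf; apply: cvg_big => // [|i _]; [exact: mul_continuous|exact: cf]. Qed.

Lemma within_continuous_at_sqnorm n (f : T -> 'rV[R]_n) :
  within_continuous_at A f x -> within_continuous_at A (fun y => sqnorm (f y)) x.
Proof.
move=> cf; apply: within_continuous_at_sum => i; rewrite /GRing.exp /=.
have ci : within_continuous_at A (fun y => f y ord0 i) x.
  apply: (within_continuous_at_comp A setT f (fun M : 'rV[R]_n => M ord0 i)) => //.
  exact/continuous_within_continuous_at/coord_continuous.
exact: cvgM.
Qed.

End within_continuity_real.

Lemma connected_01_const {R : realType} {T : topologicalType} (S : set T)
    (phi : T -> R) :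
  connected S -> {within S, continuous phi} ->
  (forall x, S x -> phi x = 0 \/ phi x = 1) ->
  forall x1 x2, S x1 -> S x2 -> phi x1 = phi x2.
Proof.
move=> cS cphi phi01 x1 x2 Sx1 Sx2.
have /connected_intervalP img_itv := connected_continuous_connected cS cphi.
have no_half : ~ (phi @` S) (1 / 2).
  by case=> y Sy; case: (phi01 y Sy) => ->; lra.
have [e1|e1] := phi01 x1 Sx1; have [e2|e2] := phi01 x2 Sx2; rewrite ?e1 ?e2 //.
- case: no_half; apply: (img_itv 0 1); [by exists x1|by exists x2|].
  by apply/andP; split; lra.
- case: no_half; apply: (img_itv 0 1); [by exists x2|by exists x1|].
  by apply/andP; split; lra.
Qed.

Section nonmeasurable_integral.
Context {R : realType} dd (T : measurableType dd) (mu : {measure set T -> \bar R}).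
Local Open Scope ereal_scope.

(* The integrands of this development need not be measurable; for nonnegative
   functions both facts follow from the definition of the integral as a
   supremum over simple minorants. *)
Lemma ge0_le_integral_nomeas (D : set T) (f1 f2 : T -> \bar R) :
  (forall x, D x -> 0 <= f1 x <= f2 x) ->
  \int[mu]_(x in D) f1 x <= \int[mu]_(x in D) f2 x.
Proof.
move=> f12.
have f10 x : D x -> 0 <= f1 x by move/f12/andP => [].
have f20 x : D x -> 0 <= f2 x by move/f12/andP => [f10' /(le_trans f10')].
rewrite (ge0_integralE _ f10) (ge0_integralE _ f20) /=.
apply: ge_ereal_sup => _ [h /= hf <-]; apply: ereal_sup_ubound; exists h => //= x.
apply: (le_trans (hf x)); rewrite /patch; case: ifPn => // /set_mem Dx.
by case/andP: (f12 x Dx).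
Qed.

Lemma ge0_integralZl_le_nomeas (D : set T) (f : T -> \bar R) (r : R) : (0 <= r)%R ->
  (forall x, D x -> 0 <= f x) ->
  r%:E * \int[mu]_(x in D) f x <= \int[mu]_(x in D) (r%:E * f x).
Proof.
move=> r0 f0.
have rf0 x : D x -> 0 <= r%:E * f x by move=> Dx; rewrite mule_ge0 ?f0.
rewrite (ge0_integralE _ f0) (ge0_integralE _ rf0) /= -ereal_supZl //; last first.
  apply/set0P; eexists; exists (@nnsfun0 _ T R); last reflexivity.
  by move=> x /=; rewrite /patch; case: ifPn => // /set_mem Dx; exact: f0.
apply: ge_ereal_sup => _ [_ [h /= hf <-] <-]; apply: ereal_sup_ubound.
exists (scale_nnsfun h r0); last by rewrite -sintegralrM.
move=> x /=; move: (hf x); rewrite /patch; case: ifPn => /= [/set_mem Dx|_] hx.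
  by rewrite EFinM lee_wpmul2l ?lee_fin.
change (r * HBNNSimple.NonNegSimpleFun.sort h x <= 0)%R.
by rewrite mulr_ge0_le0 // -lee_fin.
Qed.

End nonmeasurable_integral.

Section cube_integral.
Context {R : realType}.
Local Open Scope ereal_scope.

Lemma cube_row_mx n (t : R) (v : 'rV[R]_n) : (0 <= t <= 1)%R -> cube n v ->
  cube n.+1 (row_mx (t%:M : 'M[R]_1) v).
Proof.
move=> t01 cv i; rewrite -(@splitK 1 n i); case: (@fintype.split 1 n i) => j /=.
  by rewrite (row_mxEl (t%:M : 'M[R]_1)) mxE (ord1 j) eqxx mulr1n.
by rewrite (row_mxEr (t%:M : 'M[R]_1)); exact: cv.
Qed.

Arguments cube_row_mx {n t v}.

Lemma in_itv01 (t : R) : [set` `[0%R, 1%R]] t -> (0 <= t <= 1)%R.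
Proof. by rewrite /= in_itv. Qed.

Lemma cube_int_eq0 n (f : 'rV[R]_n -> \bar R) :
  (forall x, cube n x -> f x = 0) -> cube_int f = 0.
Proof.
elim: n f => [|n IH] f f0 /=; first by apply: f0 => -[].
apply: integral0_eq => t /in_itv01 t01; apply: IH => v cv; apply: f0.
exact: cube_row_mx.
Qed.

Lemma cube_int_ge0 n (f : 'rV[R]_n -> \bar R) :
  (forall x, cube n x -> 0 <= f x) -> 0 <= cube_int f.
Proof.
elim: n f => [|n IH] f f0 /=; first by apply: f0 => -[].
apply: integral_ge0 => t /in_itv01 t01; apply: IH => v cv; apply: f0.
exact: cube_row_mx.
Qed.

Lemma le_cube_int n (f g : 'rV[R]_n -> \bar R) :
  (forall x, cube n x -> 0 <= f x <= g x) -> cube_int f <= cube_int g.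
Proof.
elim: n f g => [|n IH] f g fg /=.
  have cube0 : cube 0 (0%R : 'rV[R]_0) by case.
  by case/andP: (fg _ cube0).
apply: ge0_le_integral_nomeas => t /in_itv01 t01; apply/andP; split.
  by apply: cube_int_ge0 => v cv; case/andP: (fg _ (cube_row_mx t01 cv)).
by apply: IH => v cv; apply: fg; exact: cube_row_mx.
Qed.

Lemma cube_int_Zl_le n (f : 'rV[R]_n -> \bar R) (r : R) : (0 <= r)%R ->
  (forall x, cube n x -> 0 <= f x) ->
  r%:E * cube_int f <= cube_int (fun x => r%:E * f x).
Proof.
elim: n f => [|n IH] f r0 f0 //=.
have f0t t : (0 <= t <= 1)%R -> forall v, cube n v -> 0 <= f (row_mx t%:M v).
  by move=> t01 v cv; apply: f0; exact: cube_row_mx.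
apply: le_trans; first apply: ge0_integralZl_le_nomeas => // t /in_itv01 t01.
  exact: cube_int_ge0 (f0t t t01).
apply: ge0_le_integral_nomeas => t /in_itv01 t01; apply/andP; split.
  by rewrite mule_ge0 // cube_int_ge0 // => v /(f0t t t01).
by apply: IH => // v /(f0t t t01).
Qed.

End cube_integral.

Section entropy_bounds.
Context {R : realType}.

Lemma xlogx_le0 (t : R) : 0 <= t <= 1 -> xlogx t <= 0.
Proof.
case/andP=> t0 t1; rewrite /xlogx; case: eqP => // _.
by apply: mulr_ge0_le0 => //; exact: ln_le0.
Qed.

Lemma xlogx_le_mulrB1 (t : R) : 0 <= t -> xlogx t <= t * (t - 1).
Proof.
rewrite /xlogx le_eqVlt => /predU1P[<-|t0]; first by rewrite eqxx mul0r.
rewrite gt_eqF // ler_pM2l //.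
by have := expR_ge1Dx (ln t); rewrite lnK ?posrE // => ?; lra.
Qed.

Lemma xlogx_bool (b : bool) : xlogx (b%:R : R) = 0.
Proof. by case: b; rewrite /xlogx ?eqxx // oner_eq0 ln1 mulr0. Qed.

Lemma one_hot_of_sum_mul1B_le0 n (q : 'I_n -> R) :
  (forall i, 0 <= q i <= 1) -> \sum_i q i = 1 -> \sum_i q i * (1 - q i) <= 0 ->
  exists i0, forall i, q i = (i == i0)%:R.
Proof.
move=> q01 q1 le0.
have q01P i : q i = 0 \/ q i = 1.
  have mul1B_ge0 j : 0 <= q j * (1 - q j).
    by case/andP: (q01 j) => ? ?; rewrite mulr_ge0 // subr_ge0.
  have sum0 : \sum_i q i * (1 - q i) = 0 by apply/eqP; rewrite eq_le le0 sumr_ge0.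
  move/eqP: (psumr_eq0P (fun j _ => mul1B_ge0 j) sum0 (i := i) isT).
  by rewrite mulf_eq0 subr_eq0 => /orP[] /eqP ->; [left|right].
have [i0 qi0] : exists i0, q i0 = 1.
  apply/not_existsP => qN1; move/eqP: q1; rewrite big1 ?(eq_sym 0) ?oner_eq0 //.
  by move=> i _; case: (q01P i) => // /qN1.
exists i0 => i; have [->//|ne] := eqVneq i i0.
move: q1; rewrite (bigD1 i0) //= qi0 => /(congr1 (fun z => z - 1)).
rewrite addrC addrK subrr => sum0; apply: (psumr_eq0P _ sum0) => // j _.
by case/andP: (q01 j).
Qed.

End entropy_bounds.

Section sqnorm.
Context {R : realType} {n : nat}.
Implicit Type v : 'rV[R]_n.

Lemma sqnorm_ge0 v : 0 <= sqnorm v.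
Proof. by apply: sumr_ge0 => i _; rewrite sqr_ge0. Qed.

Lemma sqnorm_eq0 v : sqnorm v = 0 -> v = 0.
Proof.
move/(psumr_eq0P (fun j _ => sqr_ge0 (v ord0 j))) => v0; apply/rowP => i.
by rewrite mxE; apply/eqP; rewrite -sqrf_eq0; apply/eqP/v0.
Qed.

Lemma sqnorm0 : sqnorm (0 : 'rV[R]_n) = 0.
Proof. by apply: big1 => i _; rewrite mxE expr0n. Qed.

End sqnorm.

Section zero_objective_competitor.
Context {R : realType} {d d' k kh : nat}.
Variable g : 'rV[R]_d -> 'I_k -> 'rV[R]_d'.

Definition narrow_ord (ah : 'I_kh) : option 'I_k := insub (val ah).

Lemma narrow_ord_val ah a : narrow_ord ah = Some a -> val ah = val a.
Proof. by rewrite /narrow_ord; case: insubP => // u _ <- [<-]. Qed.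

Lemma narrow_ord_widen (le_k_kh : (k <= kh)%N) a :
  narrow_ord (widen_ord le_k_kh a) = Some a.
Proof. by rewrite /narrow_ord /= valK. Qed.

(* The indices [ah >= k] are dummy branches at constant distance [1].  The
   weight of [ah] is the product of the distances from [x'] to all the other
   branches, so at [x' = g x a] every weight but the one of [a] vanishes. *)
Definition branch_dist (ah : 'I_kh) x (x' : 'rV[R]_d') : R :=
  if narrow_ord ah is Some a then sqnorm (x' - g x a) else 1.
Definition branch_weight ah x x' := \prod_(b | b != ah) branch_dist b x x'.
Definition total_weight x x' := \sum_ah branch_weight ah x x'.
Definition branch_resp ah x x' := branch_weight ah x x' / total_weight x x'.

Lemma branch_dist_ge0 ah x x' : 0 <= branch_dist ah x x'.
Proof. by rewrite /branch_dist; case: (narrow_ord ah) => [a|]; rewrite ?sqnorm_ge0. Qed.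

Lemma branch_weight_ge0 ah x x' : 0 <= branch_weight ah x x'.
Proof. by apply: prodr_ge0 => b _; exact: branch_dist_ge0. Qed.

Lemma branch_dist_eq0 ah x x' :
  branch_dist ah x x' = 0 -> exists2 a, narrow_ord ah = Some a & x' = g x a.
Proof.
rewrite /branch_dist; case: (narrow_ord ah) => [a|/eqP]; last by rewrite oner_eq0.
by move/sqnorm_eq0/eqP; rewrite subr_eq0 => /eqP ->; exists a.
Qed.

Section injective_branches.
Variables (x : 'rV[R]_d) (g_inj : forall a1 a2, a1 <> a2 -> g x a1 <> g x a2).

(* Two distinct weights vanish only if [x'] lies on two distinct branches;
   [ah0] merely witnesses that ['I_kh] is nonempty. *)
Lemma total_weight_gt0 (ah0 : 'I_kh) x' : 0 < total_weight x x'.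
Proof.
rewrite lt_neqAle eq_sym sumr_ge0 ?andbT => [|i _]; last exact: branch_weight_ge0.
apply/eqP => /(psumr_eq0P (fun i _ => branch_weight_ge0 i x x')) w0.
have /eqP/prodf_eq0[b nb /eqP/branch_dist_eq0[a1 e1 x1]] := @w0 ah0 isT.
have /eqP/prodf_eq0[c nc /eqP/branch_dist_eq0[a2 e2 x2]] := @w0 b isT.
apply: (g_inj a1 a2); last by rewrite -x1 -x2.
move=> e12; move/negP: nc; apply; apply/eqP/val_inj.
by rewrite (narrow_ord_val _ _ e1) (narrow_ord_val _ _ e2) e12.
Qed.

Lemma branch_resp_branch (le_k_kh : (k <= kh)%N) a ah :
  branch_resp ah x (g x a) = (ah == widen_ord le_k_kh a)%:R.
Proof.
set a' := widen_ord le_k_kh a.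
have dist0 : branch_dist a' x (g x a) = 0.
  by rewrite /branch_dist narrow_ord_widen subrr sqnorm0.
have weight0 b : b != a' -> branch_weight b x (g x a) = 0.
  move=> nb; rewrite /branch_weight (bigD1 a') 1?eq_sym // dist0; exact: mul0r.
have [->|nah] := eqVneq ah a'; last by rewrite /branch_resp weight0 // mul0r.
have W_eq : total_weight x (g x a) = branch_weight a' x (g x a).
  by rewrite /total_weight (bigD1 a') //= big1 ?addr0 // => b /weight0.
by rewrite /branch_resp -W_eq divff // gt_eqF // (total_weight_gt0 a').
Qed.

End injective_branches.

Lemma branch_resp_continuous (ah0 : 'I_kh) :
  (forall a, {within cube d, continuous (fun x => g x a)}) ->
  (forall x a1 a2, cube d x -> a1 <> a2 -> g x a1 <> g x a2) ->
  forall ah, {within [set z : 'rV[R]_d * 'rV[R]_d' | cube d z.1 /\ cube d' z.2],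
    continuous (fun z => branch_resp ah z.1 z.2)}.
Proof.
move=> g_cont g_inj ah.
pose S := [set z : 'rV[R]_d * 'rV[R]_d' | cube d z.1 /\ cube d' z.2].
have weight_cont b z : S z ->
    within_continuous_at S (fun z => branch_weight b z.1 z.2) z.
  move=> [cz1 _]; apply: within_continuous_at_prod => c; rewrite /branch_dist.
  case: (narrow_ord c) => [a|]; last exact: cvg_cst.
  apply: within_continuous_at_sqnorm; apply: cvgB.
    exact/continuous_within_continuous_at/cvg_snd.
  apply: (within_continuous_at_comp S (cube d) fst (fun x => g x a)).
  + exact/continuous_within_continuous_at/cvg_fst.
  + by move=> y [].
  + exact: (within_continuous_atP _ _).1 (g_cont a) _ cz1.
apply/within_continuous_atP => z Sz; apply: cvgM; first exact: weight_cont.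
apply: cvgV; last by apply: within_continuous_at_sum => b; exact: weight_cont.
have [cz1 _] := Sz.
by rewrite gt_eqF // (total_weight_gt0 z.1 (fun a1 a2 => g_inj z.1 a1 a2 cz1) ah0).
Qed.

Lemma exists_objective_eq0 (p : 'rV[R]_d -> R) (pi : 'I_k -> 'rV[R]_d -> R)
    (beta : R) (a0 : 'I_k) (le_k_kh : (k <= kh)%N) :
  (forall x a, cube d x -> cube d' (g x a)) ->
  (forall a, {within cube d, continuous (fun x => g x a)}) ->
  (forall x a1 a2, cube d x -> a1 <> a2 -> g x a1 <> g x a2) ->
  exists (gh' : 'rV[R]_d -> 'I_kh -> 'rV[R]_d')
    (qh' : 'I_kh -> 'rV[R]_d -> 'rV[R]_d' -> R),
    inG gh' /\ inQ qh' /\ objective beta p pi g gh' qh' = 0%E.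
Proof.
move=> g_cube g_cont g_inj.
pose gh' x (ah : 'I_kh) := g x (odflt a0 (narrow_ord ah)).
have W_gt0 x x' : cube d x -> 0 < total_weight x x'.
  move=> cx; have g_inj_x a1 a2 := g_inj x a1 a2 cx.
  exact: total_weight_gt0 x g_inj_x (widen_ord le_k_kh a0) x'.
have resp_hit x a ah : cube d x ->
    branch_resp ah x (g x a) = (ah == widen_ord le_k_kh a)%:R.
  by move=> cx; exact: (branch_resp_branch x (fun a1 a2 => g_inj x a1 a2 cx)).
exists gh', branch_resp; split; [split|split; [split; [|split]|]].
- by move=> x ah cx; exact: g_cube.
- by move=> ah; exact: g_cont.
- move=> ah x x' cx _; have W0 := W_gt0 x x' cx.
  rewrite /branch_resp divr_ge0 ?branch_weight_ge0 ?(ltW W0) //= ler_pdivrMr // mul1r.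
  rewrite /total_weight (bigD1 ah) //= lerDl.
  by apply: sumr_ge0 => i _; exact: branch_weight_ge0.
- by move=> x x' cx _; rewrite /branch_resp -mulr_suml divff // gt_eqF // W_gt0.
- exact: branch_resp_continuous (widen_ord le_k_kh a0) g_cont g_inj.
- apply: cube_int_eq0 => x cx; congr EFin; apply: big1 => a _.
  have resp_a ah := resp_hit x a ah cx.
  have loss0 : \sum_ah branch_resp ah x (g x a) * sqnorm (g x a - gh' x ah) = 0.
    apply: big1 => ah _; rewrite resp_a; have [->|_] := eqVneq; last by rewrite mul0r.
    by rewrite /gh' narrow_ord_widen /= subrr sqnorm0 mulr0.
  have entropy0 : entropy branch_resp x (g x a) = 0.
    by rewrite /entropy big1 ?oppr0 // => ah _; rewrite resp_a; exact: xlogx_bool.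
  by rewrite loss0 entropy0 mulr0 addr0 mulr0.
Qed.

End zero_objective_competitor.

Lemma cube_int_gt0_near_supp {R : realType} d k (p : 'rV[R]_d -> R)
    (pi : 'I_k -> 'rV[R]_d -> R) (F h : 'rV[R]_d -> R) a x0 :
  (forall x, cube d x -> 0 <= p x) -> (forall a x, cube d x -> 0 <= pi a x) ->
  (forall x, cube d x -> 0 <= F x) ->
  supp_a p pi a -> supp_x_a p pi a x0 ->
  within_continuous_at (cube d) h x0 -> 0 < h x0 ->
  (forall y, cube d y -> 0 <= h y -> p y * pi a y * h y <= F y) ->
  (0 < cube_int (fun x => (F x)%:E))%E.
Proof.
move=> p0 pi0 F0 sa [cx0 sx] ch hx0 hF.
set c := fine (pa p pi a).
(* [fine] sends [+oo] to [0]; then [pcond] vanishes, against [x0] being in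
   the support. *)
have c_gt0 : 0 < c.
  have [c0|//] : c = 0 \/ 0 < c.
    move: sa; rewrite /supp_a /c /=.
    by case: (pa p pi a) => [r|_|//]; [rewrite lte_fin; right|left].
  have := sx setT openT I.
  by rewrite cube_int_eq0 ?ltxx // => y _; rewrite /pcond -/c c0 invr0 !mulr0.
have pc0 y : cube d y -> 0 <= pcond p pi a y.
  by move=> cy; rewrite /pcond -/c divr_ge0 ?mulr_ge0 ?p0 ?pi0 ?ltW.
set eta := h x0 / 2.
have eta0 : 0 < eta by rewrite divr_gt0.
have : \forall y \near within (cube d) (nbhs x0), `|h x0 - h y| < eta.
  by apply: cvgr_dist_lt => //; exact: ch.
rewrite near_withinE nbhsE => -[V [oV Vx0] Vsub].
(* On [V], [h > eta], so [F] dominates [eta * c] times the [p(.|a)]-density on [V]. *)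
have F_ge_mass : (cube_int (fun x => (eta * c)%:E * (\1_V x * pcond p pi a x)%:E)
    <= cube_int (fun x => (F x)%:E))%E.
  apply: le_cube_int => y cy; rewrite -EFinM !lee_fin indicE.
  have [/set_mem Vy|_] := boolP (y \in V); last by rewrite mul0r mulr0 lexx F0.
  have hy : eta < h y.
    by have := Vsub y Vy cy; rewrite ltr_distlC => /andP[+ _]; rewrite /eta; lra.
  have -> : eta * c * (1 * pcond p pi a y) = p y * pi a y * eta.
    by rewrite /pcond -/c; field; rewrite gt_eqF.
  rewrite (mulr_ge0 (mulr_ge0 (p0 y cy) (pi0 a y cy)) (ltW eta0)) /=.
  apply: le_trans (hF y cy (ltW (lt_trans eta0 hy))).
  by rewrite ler_wpM2l ?mulr_ge0 ?p0 ?pi0 ?(ltW hy).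
apply: lt_le_trans F_ge_mass.
apply: (lt_le_trans _ (@cube_int_Zl_le R d _ (eta * c) _ _)).
- by rewrite mule_gt0 // ?lte_fin ?mulr_gt0 // sx.
- by rewrite mulr_ge0 // ltW.
- by move=> y cy; rewrite lee_fin mulr_ge0 ?pc0 // indicE ler0n.
Qed.

Section minimizer.
Context {R : realType} {d d' k kh : nat}.
Variables (p : 'rV[R]_d -> R) (pi : 'I_k -> 'rV[R]_d -> R)
  (g : 'rV[R]_d -> 'I_k -> 'rV[R]_d') (beta : R)
  (gh : 'rV[R]_d -> 'I_kh -> 'rV[R]_d') (qh : 'I_kh -> 'rV[R]_d -> 'rV[R]_d' -> R).
Hypotheses (p_ge0 : forall x, cube d x -> 0 <= p x)
  (pi_ge0 : forall a x, cube d x -> 0 <= pi a x)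
  (g_cube : forall x a, cube d x -> cube d' (g x a))
  (k_le_kh : (k <= kh)%N) (beta_gt0 : 0 < beta)
  (gh_G : inG gh) (qh_Q : inQ qh)
  (qh_min : forall (gh' : 'rV[R]_d -> 'I_kh -> 'rV[R]_d')
     (qh' : 'I_kh -> 'rV[R]_d -> 'rV[R]_d' -> R), inG gh' -> inQ qh' ->
     (objective beta p pi g gh qh <= objective beta p pi g gh' qh')%E)
  (g_cont : forall a, {within cube d, continuous (fun x => g x a)})
  (g_inj : forall x a1 a2, cube d x -> a1 <> a2 -> g x a1 <> g x a2)
  (supp_connected : forall a, supp_a p pi a -> connected (supp_x_a p pi a))
  (supp_meet : forall a1 a2, supp_a p pi a1 -> supp_a p pi a2 ->
     supp_x_a p pi a1 `&` supp_x_a p pi a2 !=set0).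

Definition recon_loss a y :=
  \sum_(ah < kh) qh ah y (g y a) * sqnorm (g y a - gh y ah).
Definition resp_entropy a y := entropy qh y (g y a).
Definition objective_term a y :=
  p y * pi a y * (recon_loss a y + beta * resp_entropy a y).

Lemma qh_branch01 ah a x : cube d x -> 0 <= qh ah x (g x a) <= 1.
Proof. by move=> cx; apply: qh_Q.1 => //; exact: g_cube. Qed.

Lemma qh_branch_sum1 a x : cube d x -> \sum_ah qh ah x (g x a) = 1.
Proof. by move=> cx; apply: qh_Q.2.1 => //; exact: g_cube. Qed.

Lemma qh_branch_continuous ah a x : cube d x ->
  within_continuous_at (cube d) (fun y => qh ah y (g y a)) x.
Proof.
move=> cx; pose S := [set z : 'rV[R]_d * 'rV[R]_d' | cube d z.1 /\ cube d' z.2].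
have graph_S y : cube d y -> S (y, g y a) by move=> cy; split => //=; exact: g_cube.
have graph_cont : within_continuous_at (cube d) (fun y => (y, g y a)) x.
  have id_cont : within_continuous_at (cube d) id x.
    exact/continuous_within_continuous_at/cvg_id.
  exact: cvg_pair id_cont ((within_continuous_atP _ _).1 (g_cont a) _ cx).
have qh_cont : within_continuous_at S (fun z => qh ah z.1 z.2) (x, g x a).
  exact: (within_continuous_atP _ _).1 (qh_Q.2.2 ah) _ (graph_S x cx).
exact: within_continuous_at_comp _ _ _ _ _ graph_cont graph_S qh_cont.
Qed.

Lemma recon_loss_ge0 a y : cube d y -> 0 <= recon_loss a y.
Proof.
move=> cy; apply: sumr_ge0 => ah _; rewrite mulr_ge0 ?sqnorm_ge0 //.
by case/andP: (qh_branch01 ah a y cy).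
Qed.

Lemma resp_entropy_ge0 a y : cube d y -> 0 <= resp_entropy a y.
Proof.
move=> cy; rewrite oppr_ge0; apply: sumr_le0 => ah _.
exact/xlogx_le0/qh_branch01.
Qed.

Lemma objective_term_ge0 a y : cube d y -> 0 <= objective_term a y.
Proof.
move=> cy; rewrite !mulr_ge0 ?p_ge0 ?pi_ge0 ?addr_ge0 ?recon_loss_ge0 //.
by rewrite mulr_ge0 ?resp_entropy_ge0 ?ltW.
Qed.

Lemma objective_term_le_sum a y : cube d y ->
  objective_term a y <= \sum_b objective_term b y.
Proof.
move=> cy; rewrite (bigD1 a) //= lerDl.
by apply: sumr_ge0 => b _; exact: objective_term_ge0.
Qed.

(* The minimal objective is [0], by the competitor of [exists_objective_eq0]. *)
Lemma supp_minorant_le0 (h : 'rV[R]_d -> R) a x0 :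
  supp_a p pi a -> supp_x_a p pi a x0 -> within_continuous_at (cube d) h x0 ->
  (forall y, cube d y -> 0 <= h y -> h y <= recon_loss a y + beta * resp_entropy a y) ->
  h x0 <= 0.
Proof.
move=> sa sx ch h_le; rewrite leNgt; apply/negP => hx0.
have [gh' [qh' [G' [Q' obj0]]]] :=
  exists_objective_eq0 g p pi beta a k_le_kh g_cube g_cont g_inj.
have := qh_min _ _ G' Q'; rewrite obj0 leNgt => /negP; apply.
have -> : objective beta p pi g gh qh =
    cube_int (fun x => (\sum_b objective_term b x)%:E) by [].
apply: (cube_int_gt0_near_supp _ _ _ _ _ h _ _ p_ge0 pi_ge0 _ sa sx ch hx0).
  by move=> y cy; apply: sumr_ge0 => b _; exact: objective_term_ge0.
move=> y cy hy; apply: le_trans (objective_term_le_sum a y cy).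
by rewrite ler_wpM2l ?mulr_ge0 ?p_ge0 ?pi_ge0 ?h_le.
Qed.

Lemma qh_one_hot x a : supp_xa p pi x a ->
  exists ah0, forall ah, qh ah x (g x a) = (ah == ah0)%:R.
Proof.
move=> [sa sx]; have cx := sx.1.
apply: one_hot_of_sum_mul1B_le0 => [ah||]; [exact: qh_branch01|exact: qh_branch_sum1|].
rewrite -(pmulr_rle0 _ beta_gt0).
pose gini y := \sum_ah qh ah y (g y a) * (1 - qh ah y (g y a)).
apply: (supp_minorant_le0 (fun y => beta * gini y) _ _ sa sx) => [|y cy _].
  apply: cvgM; first exact: cvg_cst.
  apply: within_continuous_at_sum => ah; apply: cvgM; first exact: qh_branch_continuous.
  by apply: cvgB; [exact: cvg_cst|exact: qh_branch_continuous].
apply: le_trans (_ : beta * resp_entropy a y <= _); last first.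
  by rewrite lerDr recon_loss_ge0.
rewrite ler_wpM2l ?(ltW beta_gt0) // /gini /resp_entropy /entropy -sumrN.
apply: ler_sum => ah _.
have /andP[q0 _] := qh_branch01 ah a y cy.
by have := xlogx_le_mulrB1 _ q0; lra.
Qed.

Lemma exists_one_hot_assignment : exists v : 'rV[R]_d -> 'I_k -> 'I_kh,
  forall x a, supp_xa p pi x a -> forall ah, qh ah x (g x a) = (ah == v x a)%:R.
Proof.
exists (fun x a => xget (widen_ord k_le_kh a)
  [set ah0 | forall ah, qh ah x (g x a) = (ah == ah0)%:R]).
by move=> x a s; have := xgetPex (widen_ord k_le_kh a) (qh_one_hot x a s).
Qed.

Lemma qh_const_on_supp ah a : supp_a p pi a -> forall x1 x2,
  supp_x_a p pi a x1 -> supp_x_a p pi a x2 -> qh ah x1 (g x1 a) = qh ah x2 (g x2 a).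
Proof.
move=> sa; apply: connected_01_const; first exact: supp_connected.
  apply: (within_continuous_subset (cube d)) => [y []//|y [cy _]].
  exact: qh_branch_continuous.
move=> y sy; have [ah0 ->] := qh_one_hot y a (conj sa sy).
by case: (_ == _); [right|left].
Qed.

Lemma exists_action_assignment : exists v : 'I_k -> 'I_kh,
  forall x a, supp_xa p pi x a -> forall ah, qh ah x (g x a) = (ah == v a)%:R.
Proof.
have [v vP] := exists_one_hot_assignment.
pose x_of a := xget (0 : 'rV[R]_d) [set x | supp_xa p pi x a].
exists (fun a => v (x_of a) a) => x a s ah.
have s' : supp_xa p pi (x_of a) a by have := xgetPex 0 (ex_intro (supp_xa p pi ^~ a) x s).
by rewrite (qh_const_on_supp ah a s.1 x (x_of a) s.2 s'.2) vP.
Qed.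

Lemma action_assignment_injective (v : 'I_k -> 'I_kh) :
  (forall x a, supp_xa p pi x a -> forall ah, qh ah x (g x a) = (ah == v a)%:R) ->
  {in supp_a p pi &, injective v}.
Proof.
move=> vP a1 a2 /set_mem s1 /set_mem s2 v12; apply: contrapT => a12.
have [x [x1 x2]] := supp_meet a1 a2 s1 s2.
have on_branch a : supp_a p pi a -> supp_x_a p pi a x -> v a = v a1 ->
    g x a = gh x (v a1).
  move=> sa sx va; set w := v a1; have cx := sx.1.
  have : qh w x (g x a) * sqnorm (g x a - gh x w) <= 0.
    apply: (supp_minorant_le0 (fun y => qh w y (g y a) * sqnorm (g y a - gh y w))
      _ _ sa sx) => [|y cy _].
      have dist_cont : within_continuous_at (cube d) (fun y => g y a - gh y w) x.
        apply: cvgB; first exact: (within_continuous_atP _ _).1 (g_cont a) _ cx.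
        exact: (within_continuous_atP _ _).1 (gh_G.2 w) _ cx.
      apply: cvgM; first exact: qh_branch_continuous.
      exact: within_continuous_at_sqnorm dist_cont.
    apply: le_trans (_ : recon_loss a y <= _); last first.
      by rewrite lerDl mulr_ge0 ?resp_entropy_ge0 ?ltW.
    rewrite /recon_loss (bigD1 w) //= lerDl; apply: sumr_ge0 => ah _.
    by rewrite mulr_ge0 ?sqnorm_ge0 //; case/andP: (qh_branch01 ah a y cy).
  rewrite (vP x a (conj sa sx)) va eqxx mul1r => le0.
  have /sqnorm_eq0/eqP : sqnorm (g x a - gh x w) = 0.
    by apply/eqP; rewrite eq_le le0 sqnorm_ge0.
  by rewrite subr_eq0 => /eqP.
by apply: (g_inj x a1 a2 x1.1 a12); rewrite (on_branch a1) // (on_branch a2).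
Qed.

End minimizer.

Theorem theorem1 (R : realType) (d d' k kh : nat)
  (p : 'rV[R]_d -> R) (pi : 'I_k -> 'rV[R]_d -> R)
  (g : 'rV[R]_d -> 'I_k -> 'rV[R]_d') (beta : R)
  (gh : 'rV[R]_d -> 'I_kh -> 'rV[R]_d') (qh : 'I_kh -> 'rV[R]_d -> 'rV[R]_d' -> R) :
  (forall x, cube d x -> 0 <= p x) -> borel_fun p ->
  cube_int (fun x => (p x)%:E) = 1%E ->
  (forall a x, cube d x -> 0 <= pi a x) ->
  (forall x, cube d x -> \sum_(a < k) pi a x = 1) ->
  (forall a, borel_fun (pi a)) ->
  (forall x a, cube d x -> cube d' (g x a)) ->
  (k <= kh)%N -> 0 < beta ->
  inG gh -> inQ qh ->
  (forall (gh' : 'rV[R]_d -> 'I_kh -> 'rV[R]_d') (qh' : 'I_kh -> 'rV[R]_d -> 'rV[R]_d' -> R),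
     inG gh' -> inQ qh' ->
     (objective beta p pi g gh qh <= objective beta p pi g gh' qh')%E) ->
  let A1 := forall a, {within cube d, continuous (fun x => g x a)} in
  let A2 := forall x a1 a2, cube d x -> a1 <> a2 -> g x a1 <> g x a2 in
  let A3 := forall a, supp_a p pi a -> connected (supp_x_a p pi a) in
  let A4 := forall a1 a2, supp_a p pi a1 -> supp_a p pi a2 ->
              supp_x_a p pi a1 `&` supp_x_a p pi a2 !=set0 in
  (A1 -> A2 ->
    exists v : 'rV[R]_d -> 'I_k -> 'I_kh,
      forall x a, supp_xa p pi x a -> forall ah : 'I_kh,
        qh ah x (g x a) = (ah == v x a)%:R) /\
  (A1 -> A2 -> A3 ->
    exists v : 'I_k -> 'I_kh,
      forall x a, supp_xa p pi x a -> forall ah : 'I_kh,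
        qh ah x (g x a) = (ah == v a)%:R) /\
  (A1 -> A2 -> A3 -> A4 ->
    forall v : 'I_k -> 'I_kh,
      (forall x a, supp_xa p pi x a -> forall ah : 'I_kh,
        qh ah x (g x a) = (ah == v a)%:R) ->
      {in supp_a p pi &, injective v}).
Proof.
move=> p_ge0 _ _ pi_ge0 _ _ g_cube k_le_kh beta_gt0 gh_G qh_Q qh_min A1 A2 A3 A4.
split; [|split].
- by move=> g_cont g_inj; apply: (exists_one_hot_assignment p pi g beta gh).
- by move=> g_cont g_inj supp_conn; apply: (exists_action_assignment p pi g beta gh).
- move=> g_cont g_inj supp_conn supp_meet v.
  by apply: (action_assignment_injective p pi g beta gh).
Qed.
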